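(* Let $j\in\{1,\ldots,d\}$ and let $A,B\subseteq\mathbb{R}^d$ be compactly $j$-generated cones with $(A\cap B)\setminus\{0\}\neq\emptyset$. Then $A\cap B$ is compactly $j$-generated and $\sigma_j(A\cap B)=\sigma_j(A)\cap\sigma_j(B)$.
   Context: For $A\subseteq\mathbb{R}^d$ and $j\in\{1,\ldots,d\}$, $\sigma_j(A)=\{x=(x^1,\ldots,x^d)\in A: x^j=1\}$. A cone $A\subseteq\mathbb{R}^d$ is compactly $j$-generated if $\sigma_j(A)$ is compact and non-empty and $A=\{\lambda x:\lambda\ge0,\ x\in\sigma_j(A)\}$. *)

From mathcomp Require Import all_boot all_order all_algebra.
From mathcomp Require Import all_classical all_reals all_analysis.
Set Implicit Arguments. Unset Strict Implicit. Unset Printing Implicit Defensive.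
Import Order.TTheory GRing.Theory Num.Theory.
Import numFieldNormedType.Exports.
Local Open Scope ring_scope.
Local Open Scope classical_set_scope.

Definition sigma_j (R : realType) (d : nat) (j : 'I_d) (A : set 'rV[R]_d)
  : set 'rV[R]_d := [set x | A x /\ x ord0 j = 1].

Definition compactly_generated (R : realType) (d : nat) (j : 'I_d)
  (A : set 'rV[R]_d) : Prop :=
  compact (sigma_j j A) /\ sigma_j j A !=set0 /\
  A = [set y | exists2 l : R, 0 <= l & exists2 x, sigma_j j A x & y = l *: x].

(* Every nonzero point y of a compactly j-generated cone is y^j times a point
   of the base, and y^j > 0; so in a common point of A and B the normalised
   vector y / y^j lies in both bases. Hence the base of A `&` B is the
   intersection of the bases, which is compact as a closed subset of a
   compact set, and nonempty by the hypothesis on A `&` B. *)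
From mathcomp Require Import all_boot all_order all_algebra.
From mathcomp Require Import all_classical all_reals all_analysis.
Set Implicit Arguments. Unset Strict Implicit. Unset Printing Implicit Defensive.
Import Order.TTheory GRing.Theory Num.Theory.
Import numFieldNormedType.Exports.
Local Open Scope ring_scope.
Local Open Scope classical_set_scope.

Section CompactlyGenerated.
Variables (R : realType) (d : nat) (j : 'I_d).

Lemma sigma_jI (A B : set 'rV[R]_d) :
  sigma_j j (A `&` B) = sigma_j j A `&` sigma_j j B.
Proof. by apply/seteqP; split=> x /=; rewrite /sigma_j /=; tauto. Qed.

Variables (A : set 'rV[R]_d).
Hypothesis cgA : compactly_generated j A.

Lemma cgen_scale l x : 0 <= l -> sigma_j j A x -> A (l *: x).
Proof. by case: cgA => _ [_ eA] l0 Ax; rewrite [A]eA; exists l => //; exists x. Qed.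

Lemma cgen_decomp y : A y ->
  0 <= y ord0 j /\ exists2 x, sigma_j j A x & y = y ord0 j *: x.
Proof.
case: cgA => _ [_ eA]; rewrite {1}eA => /= -[l l0 [x Ax ey]].
have -> : y ord0 j = l by rewrite ey mxE Ax.2 mulr1.
by split=> //; exists x.
Qed.

Lemma cgen_coord_eq0 y : A y -> y ord0 j = 0 -> y = 0.
Proof. by move=> /cgen_decomp[_ [x _ ey]] yj; rewrite ey yj scale0r. Qed.

Lemma cgen_normalize y : A y -> y ord0 j != 0 ->
  sigma_j j A ((y ord0 j)^-1 *: y).
Proof.
move=> /cgen_decomp[_ [x Ax ey]] yj.
by rewrite [X in _ *: X]ey scalerA mulVf // scale1r.
Qed.

End CompactlyGenerated.

Theorem lemmaA1 (R : realType) (d : nat) (j : 'I_d) (A B : set 'rV[R]_d) :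
  compactly_generated j A -> compactly_generated j B ->
  (A `&` B) `\ 0 !=set0 ->
  compactly_generated j (A `&` B) /\
  sigma_j j (A `&` B) = sigma_j j A `&` sigma_j j B.
Proof.
move=> cA cB [y [[Ay By] y0]].
have sigmaAB z : A z -> B z -> z ord0 j != 0 ->
    sigma_j j (A `&` B) ((z ord0 j)^-1 *: z).
  by move=> Az Bz zj; rewrite sigma_jI; split; exact: cgen_normalize.
have yj : y ord0 j != 0 by apply/eqP => /(cgen_coord_eq0 cA Ay)/y0.
split; last exact: sigma_jI.
split; [|split].
- rewrite sigma_jI; apply: compact_closedI; first by case: cA.
  by apply: compact_closed; [exact: norm_hausdorff | case: cB].
- by exists ((y ord0 j)^-1 *: y); exact: sigmaAB.
- apply/seteqP; split=> [z [Az Bz] | _ [l l0 [x ABx ->]]] /=; last first.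
    move: ABx; rewrite sigma_jI => -[Ax Bx].
    by split; [apply: (cgen_scale cA) | apply: (cgen_scale cB)].
  have [zj0 | zj] := eqVneq (z ord0 j) 0.
    exists 0 => //; exists ((y ord0 j)^-1 *: y); first exact: sigmaAB.
    by rewrite scale0r (cgen_coord_eq0 cA Az zj0).
  exists (z ord0 j); first by case: (cgen_decomp cA Az).
  exists ((z ord0 j)^-1 *: z); first exact: sigmaAB.
  by rewrite scalerKV.
Qed.
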